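(* Let $\Gamma$ be a connected graph of rank $r$ and let $f:\Gamma\to\Gamma$ be an irreducible graph map which is a homotopy equivalence and which has a fold decomposition consisting of a single fold. Then $\Gamma$ is isomorphic to one of $R_r$, $\Delta_k^-$ or $\Delta_k^+$ for some $k\ge 2$. In particular: (i) if $r\equiv 0\pmod 3$ then $\Gamma\cong R_r$ or $\Gamma\cong\Delta_k^-$ (with $3k-3=r$); (ii) if $r\equiv 1\pmod 3$ then $\Gamma\cong R_r$; (iii) if $r\equiv 2\pmod 3$ then $\Gamma\cong R_r$ or $\Gamma\cong\Delta_k^+$ (with $3k-1=r$).
   Context: A graph $\Gamma$ is a finite 1-dimensional CW complex (multiple edges and loops allowed) with a chosen orientation on each edge; $\mathcal{V}\Gamma$, $\mathcal{E}\Gamma$, $\mathcal{E}^{\pm}\Gamma$ denote vertices, edges, and edges with both orientations; $\bar e$ is the reverse of $e$ and $\iota(e),\tau(e)$ its initial/terminal vertices. The rank of a connected graph is $|\mathcal{E}\Gamma|-|\mathcal{V}\Gamma|+1$. An edge path is a nonempty concatenation $e_1\cdots e_k$ of oriented edges with $\tau(e_i)=\iota(e_{i+1})$; it traverses $e$ if $e$ or $\bar e$ occurs in it. A graph map $f:\Gamma_1\to\Gamma_2$ consists of a vertex map $f_V$ and an edge path $f(e)$ for each $e\in\mathcal{E}^\pm\Gamma_1$ with $\iota(f(e))=f_V(\iota(e))$ and $f(\bar e)=\overline{f(e)}$; it is regarded as a continuous map. A graph isomorphism is a graph map with $f_V$ bijective and restricting to a bijection from $\mathcal{E}^\pm\Gamma_1$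 onto the single edges $\mathcal{E}^\pm\Gamma_2$. The transition matrix $T(f)$ of a self map has $(i,j)$ entry the number of times $f(e_i)$ traverses $e_j$; $f$ is irreducible if $T(f)$ is an irreducible matrix and every vertex of $\Gamma$ has valence at least $3$. Folds: for distinct oriented edges $e_0,e_1$ with $e_1\neq\bar e_0$ and $\iota(e_0)=\iota(e_1)$: the proper full fold of $e_1$ over $e_0$ subdivides $e_1=e_1''e_1'$ and identifies $e_1''$ with $e_0$ (map $e_1\mapsto e_0e_1'$, other edges fixed); the complete fold identifies $e_0$ and $e_1$ entirely; the partial fold subdivides $e_0=e_0'e_0''$, $e_1=e_1''e_1'$ and identifies $e_1''$ with $e_0'$. A fold decomposition with $m$ folds is an expression $f=h\circ f_m\circ\cdots\circ f_1$ with $\Gamma_1=\Gamma$, each $f_i:\Gamma_i\to\Gamma_{i+1}$ a fold, and $h:\Gamma_{m+1}\to\Gamma$ a graph isomorphism. Graphs: the $s$-gonal graph of depth $k$, $P_{s,k}$, has vertices $v_0,\dots,v_{s-1}$ and edges $e_i^j$ ($0\le i\le s-1$, $1\le j\le k$) with $e_i^j$ joining $v_i$ to $v_{i+1}$ (indices mod $s$). The rose $R_r=P_{1,r}$ is one vertex with $r$ loops. $\Delta_k^-$ is $P_{3,k}$ with one edge removed (rank $3k-3$); $\Delta_k^+$ is $P_{3,k+1}$ with two edges from two distinct sides $\{e_i^j:1\le j\le k+1\}$ removed (rank $3k-1$). *)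

From HB Require Import structures.
From mathcomp Require Import all_boot all_order all_algebra.
Set Implicit Arguments. Unset Strict Implicit. Unset Printing Implicit Defensive.
Import GRing.Theory Num.Theory.

Record graph := Graph { gV : finType; gE : finType; gsrc : gE -> gV; gtgt : gE -> gV }.

(* oriented edges E^{\pm}: (e,false) = e, (e,true) = \bar e *)
Notation oedge G := (gE G * bool)%type.

Definition oinit (G : graph) (e : oedge G) : gV G := if e.2 then gtgt e.1 else gsrc e.1.
Definition oterm (G : graph) (e : oedge G) : gV G := if e.2 then gsrc e.1 else gtgt e.1.
Definition orev (G : graph) (e : oedge G) : oedge G := (e.1, ~~ e.2).

Fixpoint is_walk (G : graph) (v : gV G) (p : seq (oedge G)) : bool :=
  if p is e :: p' then (oinit e == v) && is_walk (oterm e) p' else true.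
Definition wend (G : graph) (v : gV G) (p : seq (oedge G)) : gV G := last v (map (@oterm G) p).
Definition revp (G : graph) (p : seq (oedge G)) : seq (oedge G) := rev (map (@orev G) p).

Definition red (G : graph) (p : seq (oedge G)) : seq (oedge G) :=
  foldr (fun e acc => if acc is e' :: acc' then (if e' == orev e then acc' else e :: acc)
                      else [:: e]) [::] p.

(* valence: number of oriented edges issuing from v (loops count twice) *)
Definition valence (G : graph) (v : gV G) : nat := #|[pred e : oedge G | oinit e == v]|.

Definition adj (G : graph) : rel (gV G) := fun x y =>
  [exists u : gE G, ((gsrc u == x) && (gtgt u == y)) || ((gsrc u == y) && (gtgt u == x))].

Definition connected (G : graph) : Prop :=
  0 < #|gV G| /\ forall x y : gV G, connect (@adj G) x y.

Definition rank (G : graph) : nat := (#|gE G| + 1 - #|gV G|)%N.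

Record gmap (G H : graph) := GMap { gmV : gV G -> gV H; gmE : gE G -> seq (oedge H) }.

Definition oimage (G H : graph) (f : gmap G H) (e : oedge G) : seq (oedge H) :=
  if e.2 then revp (gmE f e.1) else gmE f e.1.
Definition pimage (G H : graph) (f : gmap G H) (p : seq (oedge G)) : seq (oedge H) :=
  flatten (map (oimage f) p).

Definition is_gmap (G H : graph) (f : gmap G H) : Prop :=
  forall u : gE G, [/\ gmE f u != [::], is_walk (gmV f (gsrc u)) (gmE f u)
                     & wend (gmV f (gsrc u)) (gmE f u) = gmV f (gtgt u)].

Definition gcomp (G H K : graph) (h : gmap H K) (g : gmap G H) : gmap G K :=
  GMap (fun v => gmV h (gmV g v)) (fun u => pimage h (gmE g u)).

Definition gmap_eq (G H : graph) (f g : gmap G H) : Prop :=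
  gmV f =1 gmV g /\ gmE f =1 gmE g.

Definition is_giso (G H : graph) (h : gmap G H) : Prop :=
  is_gmap h /\ bijective (gmV h) /\
  exists hE : oedge G -> oedge H, bijective hE /\ forall e, oimage h e = [:: hE e].

Definition isomorphic (G H : graph) : Prop := exists h : gmap G H, is_giso h.

Definition ntrav (G : graph) (f : gmap G G) (u w : gE G) : nat :=
  count (fun e : oedge G => e.1 == w) (gmE f u).

Definition transition (G : graph) (f : gmap G G) : 'M[int]_#|gE G| :=
  \matrix_(i, j) Posz (ntrav f (enum_val i) (enum_val j)).

Definition irreducible_mx (n : nat) (T : 'M[int]_n) : Prop :=
  forall i j : 'I_n, exists k : nat, (0 < (T ^+ k.+1) i j)%R.

Definition irreducible_map (G : graph) (f : gmap G G) : Prop :=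
  irreducible_mx (transition f) /\ forall v : gV G, 3 <= valence v.

(* Homotopy equivalence: f induces an isomorphism on pi_1 at every      *)
(* basepoint (pi_1 = reduced edge loops).                               *)
Definition homotopy_equiv (G H : graph) (f : gmap G H) : Prop :=
  forall v : gV G,
    (forall p, is_walk v p -> wend v p = v -> red (pimage f p) = [::] -> red p = [::]) /\
    (forall q, is_walk (gmV f v) q -> wend (gmV f v) q = gmV f v ->
       exists p, [/\ is_walk v p, wend v p = v & red (pimage f p) = red q]).

Definition orient (G : graph) (b : bool) (p : seq (oedge G)) := if b then revp p else p.

Section Folds.
Variables (G : graph) (u0 u1 : gE G) (b0 b1 : bool).
Let e0 : oedge G := (u0, b0).
Let e1 : oedge G := (u1, b1).

(* proper full fold of e1 over e0: e1 = e1'' e1', e1'' identified with e0;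
   the edge u1 now carries e1' (oriented as (u1,b1): from tau e0 to tau e1) *)
Definition pff_graph : graph :=
  Graph (fun u => if u == u1 then (if b1 then gsrc u1 else oterm e0) else gsrc u)
        (fun u => if u == u1 then (if b1 then oterm e0 else gtgt u1) else gtgt u).
Definition pff_map : gmap G pff_graph :=
  @GMap G pff_graph (fun v => v)
    (fun u => if u == u1 then orient b1 [:: (e0 : oedge pff_graph); (u1, b1)]
              else [:: ((u, false) : oedge pff_graph)]).

(* partial fold: e0 = e0' e0'', e1 = e1'' e1', e1'' identified with e0'.
   New vertex inr tt (the midpoint); inr tt : iota e0 -> mid is e0';
   inl u0 : mid -> tau e0 is e0''; inl u1 : mid -> tau e1 is e1'. *)
Definition pf_src (x : gE G + unit) : gV G + unit :=
  match x with
  | inl u => if (u == u0) || (u == u1) then inr tt else inl (gsrc u)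
  | inr _ => inl (oinit e0)
  end.
Definition pf_tgt (x : gE G + unit) : gV G + unit :=
  match x with
  | inl u => if u == u0 then inl (oterm e0) else if u == u1 then inl (oterm e1)
             else inl (gtgt u)
  | inr _ => inr tt
  end.
Definition pf_graph : graph := Graph pf_src pf_tgt.
Definition pf_map : gmap G pf_graph :=
  @GMap G pf_graph (fun v => inl v)
    (fun u => if u == u0 then orient b0 [:: ((inr tt, false) : oedge pf_graph); (inl u0, false)]
              else if u == u1 then orient b1 [:: ((inr tt, false) : oedge pf_graph); (inl u1, false)]
              else [:: ((inl u, false) : oedge pf_graph)]).

(* complete fold: identify e1 with e0 (so tau e1 with tau e0) *)
Definition cf_keepV (v : gV G) : bool := (v != oterm e1) || (oterm e0 == oterm e1).
Definition cf_qV (v : gV G) : gV G := if v == oterm e1 then oterm e0 else v.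
Lemma cf_qV_in (v : gV G) : cf_keepV (cf_qV v).
Proof.
rewrite /cf_keepV /cf_qV; case: ifP => [_|/negbT ->] //.
by case: (oterm e0 == oterm e1).
Qed.
Definition cf_V : finType := {v : gV G | cf_keepV v}.
Definition cf_E : finType := {u : gE G | u != u1}.
Definition cf_vmap (v : gV G) : cf_V := exist _ (cf_qV v) (cf_qV_in v).
Definition cf_graph : graph :=
  @Graph cf_V cf_E (fun u => cf_vmap (gsrc (val u))) (fun u => cf_vmap (gtgt (val u))).
Definition cf_map : gmap G cf_graph :=
  @GMap G cf_graph cf_vmap
    (fun u => if @insub _ (fun u => u != u1) cf_E u is Some u' then [:: ((u', false) : oedge cf_graph)]
              else if @insub _ (fun u => u != u1) cf_E u0 is Some u0'
                   then orient b1 [:: ((u0', b0) : oedge cf_graph)] else [::]).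
End Folds.

Definition one_fold_decomp (G : graph) (f : gmap G G) : Prop :=
  exists (u0 u1 : gE G) (b0 b1 : bool),
    [/\ u0 != u1  (* e1 <> e0 and e1 <> \bar e0 *),
        oinit ((u0, b0) : oedge G) = oinit ((u1, b1) : oedge G) &
        [\/ exists h : gmap (pff_graph u0 u1 b0 b1) G,
              is_giso h /\ gmap_eq f (gcomp h (pff_map u0 u1 b0 b1)),
            exists h : gmap (pf_graph u0 u1 b0 b1) G,
              is_giso h /\ gmap_eq f (gcomp h (pf_map u0 u1 b0 b1))
          | exists h : gmap (cf_graph u0 u1 b0 b1) G,
              is_giso h /\ gmap_eq f (gcomp h (cf_map u0 u1 b0 b1))]].

(* s-gonal graph of depth k with the edges not satisfying keep removed;
   edge (i,j) (j 0-based, i.e. e_i^{j+1}) joins v_i to v_{i+1 mod s} *)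
Definition Psub (s k : nat) (keep : pred ('I_s * 'I_k)) : graph :=
  @Graph 'I_s {x : 'I_s * 'I_k | keep x} (fun x => (val x).1) (fun x => ordS (val x).1).
Arguments Psub : clear implicits.

Definition Pgraph (s k : nat) : graph := Psub s k predT.
Definition Rose (r : nat) : graph := Pgraph 1 r.
(* Delta_k^- : P_{3,k} minus the edge e_0^k *)
Definition Dminus (k : nat) : graph :=
  Psub 3 k (fun x => ~~ ((x.1 == 0 :> nat) && (x.2 == k.-1 :> nat))).
(* Delta_k^+ : P_{3,k+1} minus e_0^{k+1} and e_1^{k+1} (two distinct sides) *)
Definition Dplus (k : nat) : graph :=
  Psub 3 k.+1 (fun x => ~~ ((x.1 < 2) && (x.2 == k :> nat))).

(* A partial fold creates a vertex and a complete fold destroys an edge, so the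
   single fold is a proper full fold of e1 over e0 (issuing from a vertex x, with
   terminal vertices y and z) followed by an isomorphism h with vertex bijection tau.
   Then f maps every edge u <> e1 onto one edge sigma u and e1 onto sigma(e0) sigma(e1),
   for an edge permutation sigma which irreducibility forces to be a single cycle.
   After the fold e1 joins y and z, and h turns an edge with ends a, b into one with
   ends tau a, tau b; following the cycle from e1, every edge joins tau^i y to tau^i z.
   If e0 is a loop then y = z and all edges are loops at one vertex: a rose. Otherwise
   the power rho of tau with rho y = z joins the two ends of every edge, and e0, e1
   force rho to cycle x -> y -> z, so the graph is a triangle. The fold moves one edge
   from side zx to side yz, while tau, which commutes with rho, rotates the sides: the
   identity is impossible and the two other rotations give Delta_k^- and Delta_k^+,
   with k >= 2 by the valence condition at y. *)

From mathcomp Require Import all_boot all_order all_algebra.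
From mathcomp Require Import zify.
Set Implicit Arguments. Unset Strict Implicit. Unset Printing Implicit Defensive.
Import GRing.Theory.

Section UnorderedPairs.
Variable V : eqType.
Implicit Types s t a b p q : V.

Definition upair_eq s t a b : bool := ((s == a) && (t == b)) || ((s == b) && (t == a)).

Lemma upair_eqP s t a b :
  reflect ((s = a /\ t = b) \/ (s = b /\ t = a)) (upair_eq s t a b).
Proof.
apply: (iffP orP) => [[]/andP[/eqP-> /eqP->]|[[-> ->]|[-> ->]]]; rewrite ?eqxx; by [left|right].
Qed.

Lemma upair_eqC s t a b : upair_eq s t a b -> upair_eq a b s t.
Proof. by case/upair_eqP=> -[-> ->]; rewrite /upair_eq !eqxx ?orbT. Qed.

Lemma upair_eq_swap s t a b : upair_eq s t a b = upair_eq t s a b.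
Proof. by rewrite /upair_eq orbC [(t == a) && _]andbC [(t == b) && _]andbC. Qed.

Lemma upair_eq_congr s t p q a b :
  upair_eq s t p q -> upair_eq s t a b = upair_eq p q a b.
Proof. by case/upair_eqP=> -[-> ->] //; rewrite upair_eq_swap. Qed.

Lemma upair_eq_trans s t p q a b :
  upair_eq s t p q -> upair_eq p q a b -> upair_eq s t a b.
Proof. by move/upair_eq_congr->. Qed.

Lemma upair_eq_rotation (rho : V -> V) (x y z c0 c1 : V) :
  injective rho -> x != y -> rho y = z ->
  upair_eq x y c0 (rho c0) -> upair_eq x z c1 (rho c1) -> rho x = y /\ rho z = x.
Proof.
move=> rho_inj /eqP x_ny rho_y /upair_eqP[][e0 e0'] /upair_eqP[][e1 e1'].
all: first [by split; congruence | by case: x_ny; apply: rho_inj; congruence].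
Qed.

End UnorderedPairs.

Lemma upair_eq_map (V W : eqType) (g : V -> W) (s t a b : V) :
  upair_eq s t a b -> upair_eq (g s) (g t) (g a) (g b).
Proof. by case/upair_eqP=> -[-> ->]; rewrite /upair_eq !eqxx ?orbT. Qed.

Lemma upair_eq_inj (V W : eqType) (g : V -> W) (s t a b : V) : injective g ->
  upair_eq (g s) (g t) (g a) (g b) = upair_eq s t a b.
Proof. by move=> ig; rewrite /upair_eq !(inj_eq ig). Qed.

Lemma iter_inj (T : Type) (g : T -> T) (n : nat) : injective g -> injective (iter n g).
Proof. by move=> inj_g; elim: n => [|n IHn] a b //= /inj_g/IHn. Qed.

Lemma card_pred_sum (T : finType) (P : pred T) : #|[pred x | P x]| = \sum_x (P x : nat).
Proof. by rewrite -sum1_card big_mkcond /=; apply: eq_bigr => x _; rewrite inE; case: (P x). Qed.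

Lemma card_fibers (A I : finType) (p : A -> I) : #|A| = \sum_i #|[pred a | p a == i]|.
Proof.
rewrite -sum1_card (partition_big p xpredT) //=.
by apply: eq_bigr => i _; rewrite -sum1_card.
Qed.

Lemma fiber_preserving_bij (A B I : finType) (pA : A -> I) (pB : B -> I) :
  (forall i, #|[pred a | pA a == i]| = #|[pred b | pB b == i]|) ->
  exists psi : A -> B, bijective psi /\ forall a, pB (psi a) = pA a.
Proof.
move=> eq_fib; have [b0 _ | B0] := pickP (@predT B); last first.
  have {}B0 (b : B) : False by have := B0 b.
  have A0 (a : A) : False.
    have /card_gt0P[b _] : 0 < #|[pred b | pB b == pA a]|.
      by rewrite -eq_fib; apply/card_gt0P; exists a; rewrite inE.
    exact: B0 b.
  exists (fun a => match A0 a with end); split=> [|a]; last by case: (A0 a).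
  by exists (fun b => match B0 b with end) => [a|b]; [case: (A0 a)|case: (B0 b)].
pose sA i := enum [pred a | pA a == i]; pose sB i := enum [pred b | pB b == i].
have size_s i : size (sA i) = size (sB i) by rewrite /sA /sB -!cardE eq_fib.
pose psi a := nth b0 (sB (pA a)) (index a (sA (pA a))).
have sA_pA a : a \in sA (pA a) by rewrite mem_enum inE.
have index_lt a : index a (sA (pA a)) < size (sB (pA a)) by rewrite -size_s index_mem.
have pB_psi a : pB (psi a) = pA a.
  by have := mem_nth b0 (index_lt a); rewrite mem_enum inE => /eqP.
exists psi; split=> //; apply: inj_card_bij.
  move=> a a' psi_eq; have pA_eq : pA a' = pA a by rewrite -pB_psi -psi_eq pB_psi.
  move: psi_eq; rewrite /psi pA_eq => /eqP.
  rewrite nth_uniq ?enum_uniq ?index_lt -?pA_eq ?index_lt // pA_eq => /eqP eq_idx.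
  by rewrite -(nth_index a (sA_pA a)) eq_idx nth_index // -pA_eq.
by rewrite (card_fibers pA) (card_fibers pB); apply/eq_leq/eq_bigr.
Qed.

Definition joins (G : graph) (w : gE G) (a b : gV G) : bool := upair_eq (gsrc w) (gtgt w) a b.

Definition njoins (G : graph) (a b : gV G) : nat := #|[pred w : gE G | joins w a b]|.
Arguments njoins : clear implicits.

Lemma joins_oedge (G : graph) (e : oedge G) : joins e.1 (oinit e) (oterm e).
Proof. by case: e => w []; rewrite /joins /upair_eq /oinit /oterm /= !eqxx ?orbT. Qed.

Lemma valence_sum (G : graph) (v : gV G) :
  valence v = \sum_(w : gE G) ((gsrc w == v) + (gtgt w == v)).
Proof.
rewrite /valence card_pred_sum -(pair_bigA _ (fun w b => (oinit ((w, b) : oedge G) == v) : nat)).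
by apply: eq_bigr => w _; rewrite big_bool /oinit /= addnC.
Qed.

Lemma connected_all (G : graph) (P : pred (gV G)) (x : gV G) : connected G -> P x ->
  (forall w : gE G, P (gsrc w) = P (gtgt w)) -> forall v, P v.
Proof.
case=> _ conn Px closedP v.
have cl : closed (@adj G) P.
  by move=> a b /existsP[w /orP[] /andP[/eqP<- /eqP<-]]; rewrite !unfold_in closedP.
by have := closed_connect cl (conn x v); rewrite !unfold_in Px.
Qed.

Lemma card_sig_pred (T : finType) (P Q : pred T) :
  #|[pred e : {x | P x} | Q (sval e)]| = #|[pred x | P x && Q x]|.
Proof.
rewrite -(card_image (@val_inj _ _ _) [pred e : {x | P x} | Q (sval e)]).
apply: eq_card => x; rewrite inE; apply/imageP/andP => [[[y Py]] /[!inE] Qy ->|[Px Qx]] //.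
by exists (exist _ x Px).
Qed.

Lemma card_Psub_side (s K : nat) (keep : pred ('I_s * 'I_K)) (i : 'I_s) :
  #|[pred e : gE (Psub s K keep) | (sval e).1 == i]| = #|[pred j | keep (i, j)]|.
Proof.
rewrite (card_sig_pred keep (fun x => x.1 == i)) !card_pred_sum.
transitivity (\sum_(a : 'I_s) \sum_(j : 'I_K) ((keep (a, j) && (a == i)) : nat)).
  by rewrite pair_bigA; apply: eq_bigr => -[a j].
rewrite (bigD1 i) //= [X in _ + X]big1 ?addn0 => [|a /negbTE ne]; last first.
  by apply: big1 => j _; rewrite ne andbF.
by apply: eq_bigr => j _; rewrite eqxx andbT.
Qed.

Lemma Psub_iso (G : graph) (s K : nat) (keep : pred ('I_s * 'I_K))
    (phi : gV G -> 'I_s) (side : gE G -> 'I_s) :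
  bijective phi ->
  (forall i, #|[pred w | side w == i]| = #|[pred j | keep (i, j)]|) ->
  (forall w, upair_eq (phi (gsrc w)) (phi (gtgt w)) (side w) (ordS (side w))) ->
  isomorphic G (Psub s K keep).
Proof.
move=> bij_phi card_side ends.
have [psi [[psi' psiK psi'K] side_psi]] := fiber_preserving_bij
  (pB := fun e : gE (Psub s K keep) => (sval e).1)
  (fun i => etrans (card_side i) (esym (card_Psub_side keep i))).
pose flip w := ~~ ((phi (gsrc w) == side w) && (phi (gtgt w) == ordS (side w))).
exists (@GMap G (Psub s K keep) phi (fun w => [:: (psi w, flip w)])); split; last split=> //.
  move=> w; rewrite /= /wend /oinit /oterm /= andbT /flip side_psi.
  case/upair_eqP: (ends w) => -[-> ->]; rewrite ?eqxx //=.
  by case: (ordS (side w) =P side w) => [->|]; rewrite ?eqxx.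
exists (fun e => (psi e.1, e.2 (+) flip e.1)); split; last by case=> w [].
exists (fun e => (psi' e.1, e.2 (+) flip (psi' e.1))) => -[w b] /=.
  by rewrite psiK -addbA addbb addbF.
by rewrite psi'K -addbA addbb addbF.
Qed.

Lemma rose_iso (G : graph) (x : gV G) : (forall v, v = x) -> isomorphic G (Rose (rank G)).
Proof.
move=> all_x; have ord1_eq (i j : 'I_1) : i == j by rewrite !ord1.
have bij_phi : bijective (fun _ : gV G => ord0 : 'I_1).
  by exists (fun _ => x) => [v|i]; [rewrite (all_x v)|apply/eqP].
apply: (Psub_iso (side := fun _ => ord0) bij_phi) => [i|w]; last by rewrite /upair_eq !ord1_eq.
rewrite /rank (bij_eq_card bij_phi) !card_ord addnK.
by apply: eq_card => w; rewrite !inE ord1_eq.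
Qed.

Lemma card_ord_neq (k : nat) : #|[pred j : 'I_k.+1 | (j : nat) != k]| = k.
Proof.
transitivity #|predC1 (ord_max : 'I_k.+1)|; last by rewrite cardC1 card_ord.
by apply: eq_card => j; rewrite !inE.
Qed.

Local Notation o0 := (@Ordinal 3 0 isT).
Local Notation o1 := (@Ordinal 3 1 isT).
Local Notation o2 := (@Ordinal 3 2 isT).

Lemma ord3P (i : 'I_3) : [\/ i = o0, i = o1 | i = o2].
Proof.
by case: i => -[|[|[|//]]] ?; [constructor 1|constructor 2|constructor 3]; apply: val_inj.
Qed.

Definition triangle (G : graph) (p0 p1 p2 : gV G) : Prop :=
  [/\ uniq [:: p0; p1; p2], forall v, v \in [:: p0; p1; p2]
    & forall w : gE G, [|| joins w p0 p1, joins w p1 p2 | joins w p2 p0]].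

Section Triangle.
Variables (G : graph) (p0 p1 p2 : gV G).
Hypothesis tri : triangle p0 p1 p2.

Lemma triangle_rot : triangle p1 p2 p0.
Proof.
case: tri => uniq_p cover sides; split.
- by rewrite -(rot_uniq 1) in uniq_p.
- by move=> v; have := cover v; rewrite -(mem_rot 1).
- by move=> w; case/or3P: (sides w) => ->; rewrite ?orbT.
Qed.

Lemma card_triangleV : #|gV G| = 3.
Proof.
case: tri => /card_uniqP card_p cover _.
by rewrite -[3]card_p; apply: eq_card => v; rewrite cover.
Qed.

Lemma triangle_eqF :
  ((p0 == p1) = false) * ((p1 == p2) = false) * ((p2 == p0) = false) *
  ((p1 == p0) = false) * ((p2 == p1) = false) * ((p0 == p2) = false).
Proof.
case: tri => /= + _ _; rewrite !inE !negb_or andbT => /andP[/andP[n01 n02] n12].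
by rewrite (eq_sym p2 p0) (eq_sym p1 p0) (eq_sym p2 p1) !(negbTE n01, negbTE n02, negbTE n12).
Qed.

Lemma triangle_joins1 (w : gE G) :
  (joins w p0 p1 : nat) + joins w p1 p2 + joins w p2 p0 = 1.
Proof.
case: tri => _ _ /(_ w); rewrite /joins.
by case/or3P=> /upair_eqP[][-> ->]; rewrite /upair_eq !eqxx !triangle_eqF.
Qed.

Lemma card_triangleE : #|gE G| = njoins G p0 p1 + njoins G p1 p2 + njoins G p2 p0.
Proof.
transitivity (\sum_(w : gE G) 1); first by rewrite sum1_card.
rewrite /njoins !card_pred_sum -!big_split /=.
by apply: eq_bigr => w _; rewrite triangle_joins1.
Qed.

Lemma triangle_valence : valence p1 = njoins G p0 p1 + njoins G p1 p2.
Proof.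
case: tri => _ _ sides.
rewrite valence_sum /njoins !card_pred_sum -big_split; apply: eq_bigr => w _ /=.
rewrite /joins; case/or3P: (sides w) => /upair_eqP[][-> ->].
all: by rewrite /upair_eq !eqxx !triangle_eqF.
Qed.

Lemma triangle_iso (K : nat) (keep : pred ('I_3 * 'I_K)) :
  njoins G p0 p1 = #|[pred j | keep (o0, j)]| ->
  njoins G p1 p2 = #|[pred j | keep (o1, j)]| ->
  njoins G p2 p0 = #|[pred j | keep (o2, j)]| ->
  isomorphic G (Psub 3 K keep).
Proof.
move=> card0 card1 card2; case: tri => _ cover sides.
pose phi v := if v == p0 then o0 else if v == p1 then o1 else o2.
pose side w := if joins w p0 p1 then o0 else if joins w p1 p2 then o1 else o2.
have bij_phi : bijective phi.
  exists (fun i : 'I_3 => nth p0 [:: p0; p1; p2] i) => [v|i].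
    by rewrite /phi; move: (cover v); rewrite !inE => /or3P[]/eqP->; rewrite ?eqxx ?triangle_eqF.
  by case: i => -[|[|[|//]]] ?; apply: val_inj; rewrite /phi /= ?eqxx ?triangle_eqF.
have side_eq w : [/\ (side w == o0) = joins w p0 p1, (side w == o1) = joins w p1 p2
                   & (side w == o2) = joins w p2 p0].
  by have := triangle_joins1 w; rewrite /side; do 3!case: (joins w _ _).
apply: (Psub_iso (side := side) bij_phi) => [i|w].
  by case: (ord3P i) => ->; rewrite -?(card0, card1, card2); apply: eq_card => w;
    rewrite !inE; case: (side_eq w).
have [s0 s1 s2] := side_eq w.
case/or3P: (sides w) => jw; move: (jw); rewrite -?s0 -?s1 -?s2 => /eqP->.
all: by case/upair_eqP: jw => -[-> ->]; rewrite /phi ?eqxx ?triangle_eqF.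
Qed.

Lemma triangle_Dminus (k : nat) :
  njoins G p0 p1 = k -> njoins G p1 p2 = k.+1 -> njoins G p2 p0 = k.+1 ->
  isomorphic G (Dminus k.+1).
Proof.
move=> card0 card1 card2; apply: triangle_iso; rewrite ?(card0, card1, card2).
- by rewrite -[LHS](card_ord_neq k); apply: eq_card => j; rewrite !inE.
- by rewrite -[LHS]card_ord; apply: eq_card => j; rewrite !inE.
- by rewrite -[LHS]card_ord; apply: eq_card => j; rewrite !inE.
Qed.

Lemma triangle_Dplus (k : nat) :
  njoins G p0 p1 = k -> njoins G p1 p2 = k -> njoins G p2 p0 = k.+1 ->
  isomorphic G (Dplus k).
Proof.
move=> card0 card1 card2; apply: triangle_iso; rewrite ?(card0, card1, card2).
- by rewrite -[LHS](card_ord_neq k); apply: eq_card => j; rewrite !inE.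
- by rewrite -[LHS](card_ord_neq k); apply: eq_card => j; rewrite !inE.
- by rewrite -[LHS]card_ord; apply: eq_card => j; rewrite !inE.
Qed.

End Triangle.

Lemma rotation_triangle (G : graph) (rho : gV G -> gV G) (x y z : gV G) :
  connected G -> injective rho -> rho x = y -> rho y = z -> rho z = x -> x != y ->
  (forall w : gE G, exists c, joins w c (rho c)) -> triangle x y z.
Proof.
move=> conn rho_inj rho_x rho_y rho_z x_ny edges.
have mem_rho c : (rho c \in [:: x; y; z]) = (c \in [:: x; y; z]).
  rewrite !inE -{1}rho_z -{1}rho_x -{2}rho_y !(inj_eq rho_inj).
  by case: (c == x); case: (c == y); case: (c == z).
have cover : forall v, v \in [:: x; y; z].
  apply: (connected_all (P := fun v => v \in [:: x; y; z]) (x := x) conn).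
    by rewrite !inE eqxx.
  by move=> w; have [c /upair_eqP[][-> ->]] := edges w; rewrite /= mem_rho.
split=> // [|w].
  rewrite /= !inE negb_or x_ny /= andbT.
  apply/andP; split; apply: contra x_ny => /eqP eq_v; apply/eqP/rho_inj; congruence.
have [c jw] := edges w; move: (cover c); rewrite !inE.
by case/or3P=> /eqP c_eq; rewrite c_eq ?rho_x ?rho_y ?rho_z in jw; rewrite jw ?orbT.
Qed.

Lemma triangle_relabel_cases (G : graph) (x y z : gV G) (tau rho : gV G -> gV G)
    (N' : gV G -> gV G -> nat) :
  triangle x y z -> rho x = y -> rho y = z -> rho z = x ->
  (forall v, rho (tau v) = tau (rho v)) -> (forall a b, N' a b = njoins G (tau a) (tau b)) ->
  N' y z = (njoins G y z).+1 -> (N' z x).+1 = njoins G z x ->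
  njoins G z x = (njoins G y z).+1 /\
  (njoins G x y = (njoins G y z).+1 \/ njoins G x y = njoins G y z).
Proof.
move=> tri rho_x rho_y rho_z rho_tau N'E; rewrite !N'E.
have tau_z : tau z = rho (tau y) by rewrite -rho_y rho_tau.
have tau_x : tau x = rho (tau z) by rewrite -rho_z rho_tau.
case: tri => _ /(_ (tau y)) + _; rewrite !inE => /or3P[]/eqP tau_y.
- by rewrite tau_x tau_z tau_y rho_x rho_y => <- <-; split; [|left].
- by rewrite tau_z tau_y rho_y; lia.
- by rewrite tau_x tau_z tau_y rho_z rho_x => ->; split=> //; right; lia.
Qed.

Lemma no_giso_pf_graph (G : graph) (u0 u1 : gE G) (b0 b1 : bool)
  (h : gmap (pf_graph u0 u1 b0 b1) G) : ~ is_giso h.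
Proof.
case=> _ [/bij_eq_card]; rewrite /= card_sum card_unit addn1.
by move/esym/n_Sn.
Qed.

Lemma no_giso_cf_graph (G : graph) (u0 u1 : gE G) (b0 b1 : bool)
  (h : gmap (cf_graph u0 u1 b0 b1) G) : ~ is_giso h.
Proof.
case=> _ [_ [hE [/bij_eq_card]]]; rewrite !card_prod card_bool /= /cf_E card_sig.
have := cardC1 u1; rewrite /predC1 => ->.
have : 0 < #|gE G| by apply/card_gt0P; exists u1.
by case: #|gE G| => // n _ /eqP; rewrite eqn_pmul2r //= => /eqP /n_Sn.
Qed.

Lemma giso_edge_bij (G H : graph) (h : gmap G H) : is_giso h ->
  exists sigma : gE G -> gE H, [/\ bijective sigma,
    forall e, [seq e'.1 | e' <- oimage h e] = [:: sigma e.1]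
  & forall w, joins (sigma w) (gmV h (gsrc w)) (gmV h (gtgt w))].
Proof.
case=> h_gmap [_ [hE [bij_hE oimage_hE]]].
have hE_rev w : hE (w, true) = orev (hE (w, false)).
  have := oimage_hE (w, true); rewrite /oimage /=.
  by have := oimage_hE (w, false); rewrite /oimage /= => -> [->].
pose sigma w := (hE (w, false)).1.
have hE1 e : (hE e).1 = sigma e.1 by case: e => w [] //; rewrite hE_rev.
exists sigma; split.
- apply: inj_card_bij.
    move=> w w'; rewrite /sigma.
    case E: (hE (w, false)) => [v c]; case E': (hE (w', false)) => [v' c'] /= eq_v; subst v'.
    suff /(bij_inj bij_hE)[] : hE (w, false) = hE (w', c != c') by [].
    by case: c c' E E' => -[] E E' /=; rewrite ?hE_rev E ?E'.
  have := bij_eq_card bij_hE; rewrite !card_prod card_bool => /eqP.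
  by rewrite eqn_pmul2r // => /eqP->.
- by move=> e; rewrite oimage_hE /= hE1.
- move=> w; have [_] := h_gmap w; rewrite [gmE h w](oimage_hE (w, false)) /wend /= andbT.
  by rewrite /sigma; case: (hE (w, false)) => v c /= /eqP <- <-; apply: joins_oedge (v, c).
Qed.

Lemma njoins_giso (G H : graph) (h : gmap G H) : is_giso h ->
  forall a b, njoins G a b = njoins H (gmV h a) (gmV h b).
Proof.
move=> /[dup] [[_ [/bij_inj inj_hV _]]] /giso_edge_bij[sigma [bij_sigma _ ends]] a b.
rewrite /njoins !card_pred_sum (reindex sigma) /=; last exact: onW_bij.
apply: eq_bigr => w _; rewrite /joins (upair_eq_congr _ _ (ends w)).
by rewrite upair_eq_inj.
Qed.

Lemma ntrav_comp_giso (G H : graph) (g : gmap G H) (h : gmap H G) (sigma : gE H -> gE G) :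
  (forall e, [seq e'.1 | e' <- oimage h e] = [:: sigma e.1]) ->
  forall u w, ntrav (gcomp h g) u w = count (fun e : oedge H => sigma e.1 == w) (gmE g u).
Proof.
move=> h_sigma u w; rewrite /ntrav /= /pimage count_flatten -map_comp.
elim: (gmE g u) => //= e p ->; congr (_ + _).
by rewrite -(count_map fst (pred1 w)) h_sigma /= addn0.
Qed.

Lemma irreducible_closed (G : graph) (f : gmap G G) (A : pred (gE G)) :
  irreducible_mx (transition f) -> (forall u w, 0 < ntrav f u w -> A u -> A w) ->
  forall u w, A u -> A w.
Proof.
move=> irr A_closed u w Au; apply/negPn/negP => nAw.
have Tk_eq0 k (i j : 'I_#|gE G|) : A (enum_val i) -> ~~ A (enum_val j) ->
    (transition f ^+ k.+1)%R i j = 0%R.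
  elim: k i j => [|k IHk] i j Ai nAj.
    rewrite expr1 mxE; case: (posnP (ntrav f (enum_val i) (enum_val j))) => [->//|].
    move=> /A_closed/(_ Ai) Aj.
    by rewrite Aj in nAj.
  rewrite exprSr -mulmxE mxE; apply: big1 => l _.
  have [Al|nAl] := boolP (A (enum_val l)); last by rewrite IHk // mul0r.
  rewrite [transition f l j]mxE.
  case: (posnP (ntrav f (enum_val l) (enum_val j))) => [->|/A_closed/(_ Al) Aj].
    by rewrite mulr0.
  by rewrite Aj in nAj.
have [k] := irr (enum_rank u) (enum_rank w).
by rewrite Tk_eq0 ?enum_rankK // ltxx.
Qed.

Section ProperFullFold.
Variables (G : graph) (u0 u1 : gE G) (b0 b1 : bool).
Hypothesis init_eq : oinit ((u0, b0) : oedge G) = oinit ((u1, b1) : oedge G).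

Local Notation G' := (pff_graph u0 u1 b0 b1).
Local Notation x := (oinit ((u1, b1) : oedge G)).
Local Notation y := (oterm ((u0, b0) : oedge G)).
Local Notation z := (oterm ((u1, b1) : oedge G)).

Lemma pff_ends_off (w : gE G) : w != u1 -> @gsrc G' w = gsrc w /\ @gtgt G' w = gtgt w.
Proof. by move=> /negbTE /= ->. Qed.

Lemma joins_pff_u1 : @joins G' u1 y z.
Proof. by rewrite /joins /= eqxx; case: b1; rewrite /upair_eq /oterm /= !eqxx ?orbT. Qed.

Lemma joins_u0 : joins u0 x y.
Proof. by rewrite -init_eq; apply: joins_oedge (u0, b0). Qed.

Lemma joins_u1 : joins u1 x z.
Proof. exact: joins_oedge (u1, b1). Qed.

Lemma njoins_pff (a b : gV G) :
  njoins G' a b + joins u1 a b = njoins G a b + @joins G' u1 a b.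
Proof.
rewrite /njoins !card_pred_sum (bigD1 u1) // [X in _ = X + _](bigD1 u1) //=.
rewrite (eq_bigr (fun w => joins w a b : nat)); first lia.
by move=> w /pff_ends_off[src_w tgt_w]; rewrite /joins src_w tgt_w.
Qed.

Lemma njoins_pff_triangle : triangle x y z ->
  njoins G' y z = (njoins G y z).+1 /\ (njoins G' z x).+1 = njoins G z x.
Proof.
move=> tri; have := njoins_pff y z; have := njoins_pff z x.
rewrite /joins !(upair_eq_congr _ _ joins_u1) !(upair_eq_congr _ _ joins_pff_u1).
by rewrite /upair_eq !(triangle_eqF tri) !eqxx /=; lia.
Qed.

Lemma ntrav_pff_gt0 (h : gmap G' G) (sigma : gE G -> gE G) (u w : gE G) :
  (forall e, [seq e'.1 | e' <- oimage h e] = [:: sigma e.1]) ->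
  0 < ntrav (gcomp h (pff_map u0 u1 b0 b1)) u w ->
  (w == sigma u) || (u == u1) && (w == sigma u0).
Proof.
move=> h_sigma; rewrite (ntrav_comp_giso _ h_sigma) /=.
case: eqP => [->|_] /=; last by rewrite addn0 orbF lt0b eq_sym.
by case: b1; rewrite /orient /revp /= !(eq_sym w); case: (sigma u0 == w); case: (sigma u1 == w).
Qed.

Lemma pff_sigma_cycle (f : gmap G G) (h : gmap G' G) (sigma : gE G -> gE G) :
  irreducible_mx (transition f) -> gmap_eq f (gcomp h (pff_map u0 u1 b0 b1)) ->
  (forall e, [seq e'.1 | e' <- oimage h e] = [:: sigma e.1]) -> injective sigma ->
  forall w, fconnect sigma u1 w.
Proof.
move=> irr [_ f_eq] h_sigma sigma_inj.
have orbit_u0 : forall w, fconnect sigma u0 w.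
  move=> w; apply: (@irreducible_closed G f (fconnect sigma u0) irr _ u0 w (connect0 _ u0)).
  move=> u v; rewrite /ntrav f_eq -/(ntrav _ u v).
  move=> /(ntrav_pff_gt0 h_sigma)/orP[/eqP->|/andP[_ /eqP->] _]; last exact: fconnect1.
  by move=> orbit_u; apply: connect_trans orbit_u (fconnect1 _ _).
move=> w; apply: connect_trans (orbit_u0 w).
by rewrite (fconnect_sym sigma_inj).
Qed.

Variables (sigma : gE G -> gE G) (tau : gV G -> gV G).
Hypotheses (sigma_inj : injective sigma) (tau_inj : injective tau).
Hypothesis ends_sigma : forall w : gE G, joins (sigma w) (tau (@gsrc G' w)) (tau (@gtgt G' w)).
Hypothesis sigma_cycle : forall w : gE G, fconnect sigma u1 w.

Lemma pff_edges_orbit (w : gE G) : exists i, joins w (iter i tau y) (iter i tau z).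
Proof.
have step v i : @joins G' v (iter i tau y) (iter i tau z) ->
    joins (sigma v) (iter i.+1 tau y) (iter i.+1 tau z).
  by move=> jv; apply: upair_eq_trans (ends_sigma v) _; apply: upair_eq_map.
have orbit n : exists i, @joins G' (iter n sigma u1) (iter i tau y) (iter i tau z).
  elim: n => [|n [i IHn]]; first by exists 0; apply: joins_pff_u1.
  have [-> | /pff_ends_off[src_n tgt_n]] := eqVneq (iter n.+1 sigma u1) u1.
    by exists 0; apply: joins_pff_u1.
  by exists i.+1; rewrite /joins src_n tgt_n; apply: step.
rewrite -(f_finv sigma_inj w); have [i] := orbit (findex sigma u1 (finv sigma w)).
by rewrite iter_findex ?sigma_cycle // => /step; exists i.+1.
Qed.

Lemma pff_single_vertex : connected G -> x = y -> forall v, v = x.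
Proof.
move=> conn x_y.
have y_z : y = z.
  move: joins_u0; have [i] := pff_edges_orbit u0.
  rewrite /joins x_y => /upair_eqC/upair_eq_trans/[apply]/upair_eqP[][e1 e2];
    by apply: (@iter_inj _ tau i tau_inj); rewrite e1 e2.
have loop (w : gE G) : gsrc w = gtgt w.
  by have [i] := pff_edges_orbit w; rewrite -y_z => /upair_eqP[][-> ->].
move=> v; apply/eqP; apply: (connected_all (P := pred1 x) conn (eqxx x)) => w.
by rewrite /= loop.
Qed.

Lemma pff_rotation : x != y ->
  exists rho : gV G -> gV G, [/\ injective rho, forall v, rho (tau v) = tau (rho v),
    [/\ rho x = y, rho y = z & rho z = x] & forall w, exists c, joins w c (rho c)].
Proof.
move=> x_ny; have tau_sym := fconnect_sym tau_inj.
have y_z : fconnect tau y z.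
  have [i] := pff_edges_orbit u0; have [j] := pff_edges_orbit u1.
  move=> /(upair_eq_trans (upair_eqC joins_u1))/upair_eqP[[x_j _]|[_ ->]]; last first.
    by move=> _; apply: fconnect_iter.
  move=> /(upair_eq_trans (upair_eqC joins_u0))/upair_eqP[[_ ->]|[x_i _]].
    by rewrite tau_sym fconnect_iter.
  apply: (@connect_trans _ _ x); first by rewrite x_j fconnect_iter.
  by rewrite tau_sym x_i fconnect_iter.
pose rho := iter (findex tau y z) tau.
have rho_y : rho y = z by rewrite /rho iter_findex.
have rho_inj : injective rho by apply: iter_inj.
have edges w : exists c, joins w c (rho c).
  have [i] := pff_edges_orbit w; exists (iter i tau y).
  by rewrite /rho -iterD addnC iterD -/rho rho_y.
exists rho; split=> //; first by move=> v; rewrite /rho -iterSr iterS.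
have [c0 j0] := edges u0; have [c1 j1] := edges u1.
by case: (upair_eq_rotation rho_inj x_ny rho_y (upair_eq_trans (upair_eqC joins_u0) j0)
  (upair_eq_trans (upair_eqC joins_u1) j1)).
Qed.
End ProperFullFold.

Definition rose_or_delta (G : graph) : Prop :=
  [\/ isomorphic G (Rose (rank G)),
      exists k, [/\ 2 <= k, rank G = 3 * k - 3 & isomorphic G (Dminus k)]
    | exists k, [/\ 2 <= k, rank G = 3 * k - 1 & isomorphic G (Dplus k)]].

Lemma triangle_rose_or_delta (G : graph) (x y z : gV G) :
  triangle x y z -> 3 <= valence y -> njoins G z x = (njoins G y z).+1 ->
  njoins G x y = (njoins G y z).+1 \/ njoins G x y = njoins G y z -> rose_or_delta G.
Proof.
move=> tri; rewrite (triangle_valence tri) => val_y zx_eq xy_eq.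
have rankE : rank G = njoins G x y + njoins G y z + njoins G z x + 1 - 3.
  by rewrite /rank (card_triangleE tri) (card_triangleV tri).
rewrite zx_eq in rankE; case: xy_eq => xy_eq; rewrite xy_eq in val_y rankE.
  constructor 2; exists (njoins G y z).+1; split; [lia | lia |].
  exact (triangle_Dminus (triangle_rot tri) (erefl _) zx_eq xy_eq).
constructor 3; exists (njoins G y z); split; [lia | lia |].
exact (triangle_Dplus tri xy_eq (erefl _) zx_eq).
Qed.

Lemma pff_rose_or_delta (G : graph) (f : gmap G G) (u0 u1 : gE G) (b0 b1 : bool)
    (h : gmap (pff_graph u0 u1 b0 b1) G) :
  connected G -> irreducible_map f ->
  oinit ((u0, b0) : oedge G) = oinit ((u1, b1) : oedge G) ->
  is_giso h -> gmap_eq f (gcomp h (pff_map u0 u1 b0 b1)) -> rose_or_delta G.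
Proof.
move=> conn [irr val3] init_eq iso_h f_eq.
have [sigma [[sigma' sigmaK _] h_sigma ends_sigma]] := giso_edge_bij iso_h.
have sigma_inj := can_inj sigmaK.
have tau_inj : injective (gmV h) by case: iso_h => _ [/bij_inj].
have cyc := pff_sigma_cycle irr f_eq h_sigma sigma_inj.
have [x_y | x_ny] := eqVneq (oinit ((u1, b1) : oedge G)) (oterm ((u0, b0) : oedge G)).
  constructor 1; apply: rose_iso.
  exact: (pff_single_vertex init_eq (tau := gmV h) sigma_inj tau_inj ends_sigma cyc conn x_y).
have [rho [rho_inj rho_tau [rho_x rho_y rho_z] edges]] :=
  pff_rotation init_eq sigma_inj tau_inj ends_sigma cyc x_ny.
have tri := rotation_triangle conn rho_inj rho_x rho_y rho_z x_ny edges.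
have [fold_yz fold_zx] := njoins_pff_triangle tri.
have [zx_eq xy_eq] := triangle_relabel_cases tri rho_x rho_y rho_z rho_tau
  (njoins_giso iso_h) fold_yz fold_zx.
exact: triangle_rose_or_delta tri (val3 _) zx_eq xy_eq.
Qed.

Lemma one_fold_rose_or_delta (G : graph) (f : gmap G G) :
  connected G -> irreducible_map f -> one_fold_decomp f -> rose_or_delta G.
Proof.
move=> conn irr [u0 [u1 [b0 [b1 [_ init_eq]]]]].
case=> [[h [iso_h f_eq]]|[h [/no_giso_pf_graph]]|[h [/no_giso_cf_graph]]] //.
exact: pff_rose_or_delta conn irr init_eq iso_h f_eq.
Qed.

Theorem theoremC (G : graph) (r : nat) (f : gmap G G) :
  connected G -> rank G = r ->
  is_gmap f -> irreducible_map f -> homotopy_equiv f -> one_fold_decomp f ->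
  [/\ isomorphic G (Rose r)
        \/ (exists k, 2 <= k /\ isomorphic G (Dminus k))
        \/ (exists k, 2 <= k /\ isomorphic G (Dplus k)),
      r %% 3 = 0 -> isomorphic G (Rose r)
        \/ (exists k, [/\ 2 <= k, 3 * k - 3 = r & isomorphic G (Dminus k)]),
      r %% 3 = 1 -> isomorphic G (Rose r) &
      r %% 3 = 2 -> isomorphic G (Rose r)
        \/ (exists k, [/\ 2 <= k, 3 * k - 1 = r & isomorphic G (Dplus k)])].
Proof.
move=> conn <- _ irr _ decomp.
case: (one_fold_rose_or_delta conn irr decomp) => [rose|[k [k2 rk iso]]|[k [k2 rk iso]]].
- by split=> [|_|_|_]; try left.
- have rk_mod : rank G %% 3 = 0 by rewrite rk; lia.
  by split=> [|_||]; rewrite ?rk_mod //; [right; left; exists k | right; exists k; rewrite rk].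
- have rk_mod : rank G %% 3 = 2 by rewrite rk; lia.
  by split=> [|||_]; rewrite ?rk_mod //; [right; right; exists k | right; exists k; rewrite rk].
Qed.
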